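(* Let $\mathbb M$ be an $\mathcal R$-module. Then $\mathbb M$ is dually separated if and only if for every commutative $R$-algebra $S$ the natural map $$\mathbb M^*(S)\to\operatorname{Hom}_S(\mathbb M(S),S),\qquad w\mapsto w_S,$$ is injective.
   Context: $R$ is a commutative ring. An $\mathcal R$-module is a covariant functor $\mathbb M$ from commutative $R$-algebras to abelian groups with each $\mathbb M(S)$ an $S$-module, functorially; morphisms are natural transformations that are $S$-linear on each $S$. For an $R$-algebra $S$, $\mathcal S$ denotes the functor $T\mapsto T$ on $S$-algebras, $\mathbb M_{|S}$ the restriction of $\mathbb M$ to commutative $S$-algebras, and $\mathbb M^*(S)=\operatorname{Hom}_{\mathcal S}(\mathbb M_{|S},\mathcal S)$. $\mathbb M$ is dually separated if for every commutative $R$-algebra $S$ the map $\mathbb M^*(S)\to\operatorname{Hom}_R(\mathbb M(R),S)$, $w\mapsto w_R$, is injective. *)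

From HB Require Import structures.
From mathcomp Require Import all_boot all_order all_algebra.
Set Implicit Arguments. Unset Strict Implicit. Unset Printing Implicit Defensive.
Import GRing.Theory.
Local Open Scope ring_scope.

Definition rhom (A B : pzRingType) (f : A -> B) : Prop :=
  [/\ forall x y, f (x + y) = f x + f y,
      forall x y, f (x * y) = f x * f y & f 1 = 1].

(* a commutative R-algebra: a commutative ring with a structure ring map from R
   (the zero ring is allowed, and R may be the zero ring) *)
Record calg (R : comPzRingType) := CAlg {
  ca_sort :> comPzRingType;
  ca_str : R -> ca_sort;
  ca_strP : rhom ca_str }.

Definition alg_hom (R : comPzRingType) (S T : calg R) (f : S -> T) : Prop :=
  rhom f /\ forall r : R, f (ca_str S r) = ca_str T r.

Lemma rhom_id (R : comPzRingType) : rhom (fun x : R => x).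
Proof. by split. Qed.
Definition base_alg (R : comPzRingType) : calg R := CAlg (@rhom_id R).

Lemma alg_hom_id (R : comPzRingType) (S : calg R) : alg_hom (fun x : S => x).
Proof. by split => //; split. Qed.

Lemma alg_hom_str (R : comPzRingType) (S : calg R) :
  @alg_hom R (base_alg R) S (ca_str S).
Proof. by split => //; exact: ca_strP. Qed.

Record RMod (R : comPzRingType) := {
  Mobj : forall S : calg R, lmodType S;
  Mmap : forall (S T : calg R) (f : S -> T), alg_hom f -> Mobj S -> Mobj T;
  Mmap_semilin : forall (S T : calg R) (f : S -> T) (hf : alg_hom f)
      (s : S) (m m' : Mobj S),
      Mmap hf (s *: m + m') = f s *: Mmap hf m + Mmap hf m';
  Mmap_id : forall (S : calg R) (f : S -> S) (hf : alg_hom f) (m : Mobj S),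
      (forall x, f x = x) -> Mmap hf m = m;
  Mmap_comp : forall (S T U : calg R) (f : S -> T) (g : T -> U) (h : S -> U)
      (hf : alg_hom f) (hg : alg_hom g) (hh : alg_hom h) (m : Mobj S),
      (forall x, h x = g (f x)) -> Mmap hh m = Mmap hg (Mmap hf m) }.

(* M^*(S) = Hom_{S}(M_{|S}, S-cal): an S-algebra is an R-algebra T together
   with an R-algebra map j : S -> T; a morphism of S-algebras is an
   R-algebra map commuting with the structure maps. *)
Record dualM (R : comPzRingType) (M : RMod R) (S : calg R) := {
  dw : forall (T : calg R) (j : S -> T), alg_hom j -> Mobj M T -> T;
  dw_lin : forall (T : calg R) (j : S -> T) (hj : alg_hom j) (t : T)
      (m m' : Mobj M T), dw hj (t *: m + m') = t * dw hj m + dw hj m';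
  dw_nat : forall (T T' : calg R) (j : S -> T) (j' : S -> T')
      (hj : alg_hom j) (hj' : alg_hom j') (g : T -> T') (hg : alg_hom g),
      (forall s, g (j s) = j' s) ->
      forall m : Mobj M T, dw hj' (@Mmap R M _ _ _ hg m) = g (dw hj m) }.

Definition dual_eq (R : comPzRingType) (M : RMod R) (S : calg R)
    (w w' : dualM M S) : Prop :=
  forall (T : calg R) (j : S -> T) (hj : alg_hom j) (m : Mobj M T),
    dw w hj m = dw w' hj m.

Definition w_S (R : comPzRingType) (M : RMod R) (S : calg R) (w : dualM M S)
    : Mobj M S -> S := dw w (alg_hom_id S).

(* w_R : M(R) -> S, the R-component under M^*(S) = Hom_R(M, S (x)_R -) *)
Definition w_R (R : comPzRingType) (M : RMod R) (S : calg R) (w : dualM M S)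
    : Mobj M (base_alg R) -> S :=
  fun m => w_S w (@Mmap R M _ _ _ (alg_hom_str S) m).

Definition dually_separated (R : comPzRingType) (M : RMod R) : Prop :=
  forall (S : calg R) (w w' : dualM M S),
    (forall m, w_R w m = w_R w' m) -> dual_eq w w'.

From HB Require Import structures.
From mathcomp Require Import all_boot all_order all_algebra ring.
From Stdlib Require Import ClassicalEpsilon.
Set Implicit Arguments. Unset Strict Implicit. Unset Printing Implicit Defensive.
Import GRing.Theory.
Local Open Scope ring_scope.
Local Open Scope quotient_scope.

(* Dual separation implies the condition at once, since w_R factors through
   w_S.  Conversely, let E := R (+) S eps with eps^2 = 0.  An element w of M^*(S)
   induces w^eps in M^*(E): on an E-algebra j : E -> T it sends m in M(T) to
   mu (w_{S (x)_R T} (m (x) 1)), where mu (s (x) t) = j (s eps) t.  On E itself,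
   mu (s (x) (r + x eps)) = r s eps, so w^eps_E only sees the image of M(E) in
   M(R) and is determined by w_R; by hypothesis so is w^eps.  Finally w is read
   off w^eps: for an S-algebra j : S -> T, evaluating w^eps on T[eps] (through
   r + s eps |-> r + j(s) eps) at the image of m in M(T) gives w_T(m) eps. *)

Lemma additive_morph0 (U V : zmodType) (f : U -> V) : {morph f : x y / x + y} -> f 0 = 0.
Proof. by move=> fD; apply: (addIr (f 0)); rewrite -fD !add0r. Qed.

Section RingHomTheory.
Variables (A B : comPzRingType) (f : A -> B) (hf : rhom f).

Lemma rhomD : {morph f : x y / x + y}. Proof. by case: hf. Qed.
Lemma rhomM : {morph f : x y / x * y}. Proof. by case: hf. Qed.
Lemma rhom1 : f 1 = 1. Proof. by case: hf. Qed.
Lemma rhom0 : f 0 = 0. Proof. exact: additive_morph0 rhomD. Qed.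

Definition rmorph_of_rhom : {rmorphism A -> B} :=
  HB.pack f (GRing.isNmodMorphism.Build A B f (rhom0, rhomD))
            (GRing.isMonoidMorphism.Build A B f (rhom1, rhomM)).

End RingHomTheory.

Lemma alg_hom_comp (R : comPzRingType) (A B C : calg R) (f : A -> B) (g : B -> C) :
  alg_hom f -> alg_hom g -> alg_hom (g \o f).
Proof.
move=> [hf sf] [hg sg]; split; last by move=> r /=; rewrite sf sg.
by split=> [x y|x y|] /=;
  rewrite ?(rhomD hf, rhomM hf, rhom1 hf) ?(rhomD hg, rhomM hg, rhom1 hg).
Qed.

Section SquareZeroExtension.
Variables (A B : comPzRingType) (h : {rmorphism A -> B}).

Definition sqz_ext of {rmorphism A -> B} : Type := (A * B)%type.
Local Notation AB := (sqz_ext h).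

HB.instance Definition _ := GRing.Zmodule.copy AB (A * B)%type.

Lemma sqz_addE (x y : AB) : x + y = (x.1 + y.1, x.2 + y.2). Proof. by []. Qed.

Definition sqz_mul (x y : AB) : AB := (x.1 * y.1, h x.1 * y.2 + h y.1 * x.2).

Lemma sqz_mulA : associative sqz_mul.
Proof.
by move=> [a b] [c d] [e f]; rewrite /sqz_mul /= !rmorphM; congr (_, _); ring.
Qed.
Lemma sqz_mulC : commutative sqz_mul.
Proof. by move=> [a b] [c d]; rewrite /sqz_mul /= mulrC addrC. Qed.
Lemma sqz_mul1 : left_id ((1, 0) : AB) sqz_mul.
Proof. by move=> [a b]; rewrite /sqz_mul /= rmorph1 mul1r mul1r mulr0 addr0. Qed.
Lemma sqz_mulDl : left_distributive sqz_mul +%R.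
Proof.
by move=> [a b] [c d] [e f]; rewrite /sqz_mul !sqz_addE /= rmorphD; congr (_, _); ring.
Qed.

HB.instance Definition _ :=
  GRing.Zmodule_isComPzRing.Build AB sqz_mulA sqz_mulC sqz_mul1 sqz_mulDl.

Lemma sqz_mulE (x y : AB) : x * y = (x.1 * y.1, h x.1 * y.2 + h y.1 * x.2).
Proof. by []. Qed.

End SquareZeroExtension.

Section SquareZeroExtensionAlgebra.
Variables (R : comPzRingType) (A : calg R) (B : comPzRingType) (h : {rmorphism A -> B}).

Definition sqz_str (r : R) : sqz_ext h := (ca_str A r, 0).

Lemma rhom_sqz_str : rhom sqz_str.
Proof.
have hA := ca_strP A.
split=> [x y|x y|]; rewrite /sqz_str ?sqz_addE ?sqz_mulE /=.
- by rewrite (rhomD hA) addr0.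
- by rewrite (rhomM hA) !mulr0 addr0.
- by rewrite (rhom1 hA).
Qed.

Definition sqz_alg : calg R := CAlg rhom_sqz_str.

End SquareZeroExtensionAlgebra.

Section TensorProduct.
Variables (R : comPzRingType) (S T : calg R).

Definition balanced (V : zmodType) (f : S -> T -> V) : Prop :=
  [/\ forall s s' t, f (s + s') t = f s t + f s' t,
      forall s t t', f s (t + t') = f s t + f s t' &
      forall r s t, f (s * ca_str S r) t = f s (ca_str T r * t)].

Section BalancedTheory.
Variables (V : zmodType) (f : S -> T -> V) (hf : balanced f).

Lemma balancedDl s s' t : f (s + s') t = f s t + f s' t. Proof. by case: hf. Qed.
Lemma balancedDr s t t' : f s (t + t') = f s t + f s t'. Proof. by case: hf. Qed.
Lemma balanced_str r s t : f (s * ca_str S r) t = f s (ca_str T r * t).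
Proof. by case: hf. Qed.
Lemma balanced0l t : f 0 t = 0.
Proof. by apply: (additive_morph0 (f := f^~ t)) => s s'; apply: balancedDl. Qed.
Lemma balancedNl s t : f (- s) t = - f s t.
Proof. by apply: (addIr (f s t)); rewrite -balancedDl !addNr balanced0l. Qed.

End BalancedTheory.

Definition eval_fsum (V : zmodType) (f : S -> T -> V) (x : seq (S * T)) : V :=
  \sum_(p <- x) f p.1 p.2.

(* S (x)_R T is the quotient of the formal sums of pairs by the relation "no
   balanced map tells them apart"; its universal property then holds by fiat. *)
Definition fsum_equiv (x y : seq (S * T)) : Prop :=
  forall (V : zmodType) (f : S -> T -> V), balanced f -> eval_fsum f x = eval_fsum f y.

Definition fsum_equivb (x y : seq (S * T)) : bool :=
  if excluded_middle_informative (fsum_equiv x y) then true else false.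

Lemma fsum_equivP x y : reflect (fsum_equiv x y) (fsum_equivb x y).
Proof. by rewrite /fsum_equivb; case: excluded_middle_informative; constructor. Qed.

Lemma fsum_equivb_refl : reflexive fsum_equivb.
Proof. by move=> x; apply/fsum_equivP. Qed.
Lemma fsum_equivb_sym : symmetric fsum_equivb.
Proof. by move=> x y; apply/fsum_equivP/fsum_equivP => exy V f hf; rewrite exy. Qed.
Lemma fsum_equivb_trans : transitive fsum_equivb.
Proof.
move=> y x z /fsum_equivP exy /fsum_equivP eyz.
by apply/fsum_equivP => V f hf; rewrite exy ?eyz.
Qed.

Canonical fsum_equiv_rel :=
  EquivRel fsum_equivb fsum_equivb_refl fsum_equivb_sym fsum_equivb_trans.

Definition tensor := {eq_quot fsum_equiv_rel}.
HB.instance Definition _ := Choice.on tensor.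

Definition tens (x : seq (S * T)) : tensor := \pi_tensor x.

Lemma tens_eqP x y : tens x = tens y <-> fsum_equiv x y.
Proof. by split=> [/eqquotP/fsum_equivP | exy]; last apply/eqquotP/fsum_equivP. Qed.

Lemma tensor_ind (P : tensor -> Prop) : (forall x, P (tens x)) -> forall u, P u.
Proof. by move=> Px u; rewrite -[u]reprK; apply: Px. Qed.

Lemma eval_fsum_repr (V : zmodType) (f : S -> T -> V) x :
  balanced f -> eval_fsum f (repr (tens x)) = eval_fsum f x.
Proof. by move=> hf; apply: (proj1 (tens_eqP _ _) (reprK (tens x))). Qed.

Lemma eval_fsum_cat (V : zmodType) (f : S -> T -> V) x y :
  eval_fsum f (x ++ y) = eval_fsum f x + eval_fsum f y.
Proof. exact: big_cat. Qed.

Lemma eval_fsum1 (V : zmodType) (f : S -> T -> V) s t : eval_fsum f [:: (s, t)] = f s t.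
Proof. exact: big_seq1. Qed.

Definition fsum_opp (x : seq (S * T)) := [seq (- p.1, p.2) | p <- x].
Definition fsum_mul (x y : seq (S * T)) := [seq (p.1 * q.1, p.2 * q.2) | p <- x, q <- y].

Lemma eval_fsum_opp (V : zmodType) (f : S -> T -> V) x :
  balanced f -> eval_fsum f (fsum_opp x) = - eval_fsum f x.
Proof.
by move=> hf; rewrite /eval_fsum big_map -sumrN; apply: eq_bigr => p _; apply: balancedNl.
Qed.

Lemma eval_fsum_mul (V : zmodType) (f : S -> T -> V) x y :
  eval_fsum f (fsum_mul x y) = \sum_(p <- x) \sum_(q <- y) f (p.1 * q.1) (p.2 * q.2).
Proof. exact: big_allpairs_dep. Qed.

(* Multiplying by a fixed formal sum on either side preserves balancedness,
   which is what makes the product compatible with the quotient. *)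
Lemma balanced_mulr (V : zmodType) (f : S -> T -> V) y :
  balanced f -> balanced (fun s t => \sum_(q <- y) f (s * q.1) (t * q.2)).
Proof.
move=> hf; split=> [s s' t|s t t'|r s t]; rewrite -?big_split; apply: eq_bigr => q _ /=.
- by rewrite mulrDl balancedDl.
- by rewrite mulrDl balancedDr.
- by rewrite mulrAC balanced_str // mulrA.
Qed.

Lemma balanced_mull (V : zmodType) (f : S -> T -> V) x :
  balanced f -> balanced (fun s t => \sum_(p <- x) f (p.1 * s) (p.2 * t)).
Proof.
move=> hf; split=> [s s' t|s t t'|r s t]; rewrite -?big_split; apply: eq_bigr => p _ /=.
- by rewrite mulrDr balancedDl.
- by rewrite mulrDr balancedDr.
- by rewrite mulrA balanced_str // mulrCA.
Qed.

Definition tensor_add (u v : tensor) := tens (repr u ++ repr v).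
Definition tensor_opp (u : tensor) := tens (fsum_opp (repr u)).
Definition tensor_mul (u v : tensor) := tens (fsum_mul (repr u) (repr v)).

Lemma tensor_addE x y : tensor_add (tens x) (tens y) = tens (x ++ y).
Proof. by apply/tens_eqP => V f hf; rewrite !eval_fsum_cat !eval_fsum_repr. Qed.

Lemma tensor_oppE x : tensor_opp (tens x) = tens (fsum_opp x).
Proof. by apply/tens_eqP => V f hf; rewrite !eval_fsum_opp // eval_fsum_repr. Qed.

Lemma tensor_mulE x y : tensor_mul (tens x) (tens y) = tens (fsum_mul x y).
Proof.
apply/tens_eqP => V f hf; rewrite !eval_fsum_mul.
have := eval_fsum_repr x (balanced_mulr (repr (tens y)) hf); rewrite /eval_fsum => ->.
rewrite exchange_big [RHS]exchange_big /=.
by have := eval_fsum_repr y (balanced_mull x hf); rewrite /eval_fsum => ->.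
Qed.

Lemma tensor_addA : associative tensor_add.
Proof.
by elim/tensor_ind=> x; elim/tensor_ind=> y; elim/tensor_ind=> z; rewrite !tensor_addE catA.
Qed.
Lemma tensor_addC : commutative tensor_add.
Proof.
elim/tensor_ind=> x; elim/tensor_ind=> y; rewrite !tensor_addE.
by apply/tens_eqP => V f hf; rewrite !eval_fsum_cat addrC.
Qed.
Lemma tensor_add0 : left_id (tens [::]) tensor_add.
Proof. by elim/tensor_ind=> x; rewrite tensor_addE. Qed.
Lemma tensor_addN : left_inverse (tens [::]) tensor_opp tensor_add.
Proof.
elim/tensor_ind=> x; rewrite tensor_oppE tensor_addE; apply/tens_eqP => V f hf.
by rewrite eval_fsum_cat eval_fsum_opp // addNr /eval_fsum big_nil.
Qed.

HB.instance Definition _ :=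
  GRing.isZmodule.Build tensor tensor_addA tensor_addC tensor_add0 tensor_addN.

Lemma tensor_mulA : associative tensor_mul.
Proof.
elim/tensor_ind=> x; elim/tensor_ind=> y; elim/tensor_ind=> z; rewrite !tensor_mulE.
apply/tens_eqP => V f hf; rewrite !eval_fsum_mul big_allpairs_dep.
apply: eq_bigr => p _; rewrite big_allpairs_dep.
by apply: eq_bigr => q _; apply: eq_bigr => r _ /=; rewrite !mulrA.
Qed.
Lemma tensor_mulC : commutative tensor_mul.
Proof.
elim/tensor_ind=> x; elim/tensor_ind=> y; rewrite !tensor_mulE.
apply/tens_eqP => V f hf; rewrite !eval_fsum_mul exchange_big.
by apply: eq_bigr => p _; apply: eq_bigr => q _; rewrite mulrC [p.2 * _]mulrC.
Qed.
Lemma tensor_mul1 : left_id (tens [:: (1, 1)]) tensor_mul.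
Proof.
elim/tensor_ind=> x; rewrite tensor_mulE; apply/tens_eqP => V f hf.
by rewrite eval_fsum_mul big_seq1; apply: eq_bigr => p _; rewrite !mul1r.
Qed.
Lemma tensor_mulDl : left_distributive tensor_mul tensor_add.
Proof.
elim/tensor_ind=> x; elim/tensor_ind=> y; elim/tensor_ind=> z.
rewrite tensor_addE !tensor_mulE tensor_addE; apply/tens_eqP => V f hf.
by rewrite eval_fsum_cat !eval_fsum_mul big_cat.
Qed.

HB.instance Definition _ :=
  GRing.Zmodule_isComPzRing.Build tensor tensor_mulA tensor_mulC tensor_mul1 tensor_mulDl.

Lemma tensD x y : tens x + tens y = tens (x ++ y). Proof. exact: tensor_addE. Qed.
Lemma tensM x y : tens x * tens y = tens (fsum_mul x y). Proof. exact: tensor_mulE. Qed.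
Lemma tens0 : tens [::] = 0. Proof. by []. Qed.

Definition ptens (s : S) (t : T) : tensor := tens [:: (s, t)].

Lemma tens_cons p x : tens (p :: x) = ptens p.1 p.2 + tens x.
Proof. by rewrite tensD; case: p. Qed.

Lemma ptensDl s s' t : ptens (s + s') t = ptens s t + ptens s' t.
Proof.
by rewrite tensD; apply/tens_eqP => V f hf; rewrite eval_fsum_cat !eval_fsum1 balancedDl.
Qed.
Lemma ptensDr s t t' : ptens s (t + t') = ptens s t + ptens s t'.
Proof.
by rewrite tensD; apply/tens_eqP => V f hf; rewrite eval_fsum_cat !eval_fsum1 balancedDr.
Qed.
Lemma ptensM s t s' t' : ptens s t * ptens s' t' = ptens (s * s') (t * t').
Proof. by rewrite tensM. Qed.
Lemma ptens_str r s t : ptens (s * ca_str S r) t = ptens s (ca_str T r * t).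
Proof. by apply/tens_eqP => V f hf; rewrite !eval_fsum1 balanced_str. Qed.

Definition tensor_lift (V : zmodType) (f : S -> T -> V) (u : tensor) : V :=
  eval_fsum f (repr u).

Section TensorLift.
Variables (V : zmodType) (f : S -> T -> V) (hf : balanced f).

Lemma tensor_lift_tens x : tensor_lift f (tens x) = eval_fsum f x.
Proof. exact: eval_fsum_repr. Qed.
Lemma tensor_lift_ptens s t : tensor_lift f (ptens s t) = f s t.
Proof. by rewrite tensor_lift_tens eval_fsum1. Qed.
Lemma tensor_liftD u v : tensor_lift f (u + v) = tensor_lift f u + tensor_lift f v.
Proof.
elim/tensor_ind: u => x; elim/tensor_ind: v => y.
by rewrite tensD !tensor_lift_tens eval_fsum_cat.
Qed.
End TensorLift.

Lemma tensor_lift_ext (V : zmodType) (f g : S -> T -> V) u :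
  f =2 g -> tensor_lift f u = tensor_lift g u.
Proof. by move=> e; apply: eq_bigr => p _; rewrite e. Qed.

Lemma tensor_lift_morph (V W : zmodType) (f : S -> T -> V) (h : V -> W) u :
  {morph h : a b / a + b} -> tensor_lift (fun s t => h (f s t)) u = h (tensor_lift f u).
Proof.
by move=> hD; rewrite /tensor_lift /eval_fsum (big_morph h hD (additive_morph0 hD)).
Qed.

Lemma tensor_additive_ext (V : zmodType) (F G : tensor -> V) :
  {morph F : u v / u + v} -> {morph G : u v / u + v} ->
  (forall s t, F (ptens s t) = G (ptens s t)) -> F =1 G.
Proof.
move=> FD GD e; elim/tensor_ind=> x; elim: x => [|[s t] x IH].
  by rewrite tens0 (additive_morph0 FD) (additive_morph0 GD).
by rewrite tens_cons FD GD IH e.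
Qed.

End TensorProduct.

Section TensorAlgebra.
Variables (R : comPzRingType) (S T : calg R).
Local Notation ptens := (@ptens R S T).

Lemma rhom_tensor_str : rhom (fun r => ptens (ca_str S r) 1).
Proof.
have hS := ca_strP S.
split=> [x y|x y|]; first by rewrite (rhomD hS) ptensDl.
  by rewrite ptensM (rhomM hS) mulr1.
by rewrite (rhom1 hS).
Qed.

Definition tensor_alg : calg R := CAlg rhom_tensor_str.

Definition tensor_inl (s : S) : tensor_alg := ptens s 1.
Definition tensor_inr (t : T) : tensor_alg := ptens 1 t.

Lemma tensor_inl_alg : alg_hom tensor_inl.
Proof.
split=> //; split=> [x y|x y|] //; first exact: ptensDl.
by rewrite /tensor_inl ptensM mulr1.
Qed.

Lemma tensor_inr_alg : alg_hom tensor_inr.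
Proof.
split=> [|r]; first split=> [x y|x y|] //; first exact: ptensDr.
  by rewrite /tensor_inr ptensM mulr1.
by rewrite /tensor_inr -[ca_str T r]mulr1 -ptens_str mul1r.
Qed.

Lemma tensor_inlM_inr s t : tensor_inl s * tensor_inr t = ptens s t.
Proof. by rewrite ptensM mulr1 mul1r. Qed.

Lemma tensor_lift_inrM (V : zmodType) (f : S -> T -> V) t u : balanced f ->
  tensor_lift f (tensor_inr t * u) = tensor_lift (fun s t' => f s (t * t')) u.
Proof.
move=> hf; have hft : balanced (fun s t' => f s (t * t')).
  split=> [s s' t'|s t1 t2|r s t'].
  - exact: balancedDl.
  - by rewrite mulrDr balancedDr.
  - by rewrite balanced_str // mulrCA.
elim/tensor_ind: u => x; rewrite tensM !tensor_lift_tens // eval_fsum_mul big_seq1.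
by apply: eq_bigr => p _; rewrite mul1r.
Qed.

Section UniversalProperty.
Variables (W : calg R) (a : S -> W) (b : T -> W).
Hypotheses (ha : alg_hom a) (hb : alg_hom b).

Lemma balanced_mul_hom : balanced (fun s t => a s * b t).
Proof.
have [[aD aM _] aS] := ha; have [[bD bM _] bS] := hb.
split=> [s s' t|s t t'|r s t]; first by rewrite aD mulrDl.
  by rewrite bD mulrDr.
by rewrite aM bM aS bS mulrA.
Qed.

Definition tensor_desc : tensor_alg -> W := tensor_lift (fun s t => a s * b t).

Lemma tensor_desc_ptens s t : tensor_desc (ptens s t) = a s * b t.
Proof. exact: (tensor_lift_ptens balanced_mul_hom). Qed.

Lemma tensor_desc_inl s : tensor_desc (tensor_inl s) = a s.
Proof. by rewrite tensor_desc_ptens (rhom1 hb.1) mulr1. Qed.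

Lemma tensor_desc_inr t : tensor_desc (tensor_inr t) = b t.
Proof. by rewrite tensor_desc_ptens (rhom1 ha.1) mul1r. Qed.

Lemma tensor_desc_alg : alg_hom tensor_desc.
Proof.
have [[_ aM a1] aS] := ha; have [[_ bM b1] _] := hb.
have hab := balanced_mul_hom.
split=> [|r]; last by rewrite tensor_desc_ptens aS b1 mulr1.
split=> [u v|u v|]; first exact: tensor_liftD.
- elim/tensor_ind: u => x; elim/tensor_ind: v => y.
  rewrite tensM /tensor_desc !tensor_lift_tens // eval_fsum_mul /eval_fsum big_distrl.
  apply: eq_bigr => p _; rewrite big_distrr; apply: eq_bigr => q _.
  by rewrite /= aM bM; ring.
- by rewrite tensor_desc_ptens a1 b1 mulr1.
Qed.

End UniversalProperty.

End TensorAlgebra.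

Section TensorMap.
Variables (R : comPzRingType) (S T T' : calg R) (g : T -> T') (hg : alg_hom g).
Let hinr_g := alg_hom_comp hg (tensor_inr_alg S T').

Definition tensor_map : tensor_alg S T -> tensor_alg S T' :=
  tensor_desc (@tensor_inl R S T') (@tensor_inr R S T' \o g).

Lemma tensor_map_alg : alg_hom tensor_map.
Proof. exact: tensor_desc_alg (tensor_inl_alg S T') hinr_g. Qed.

Lemma tensor_map_inl s : tensor_map (tensor_inl T s) = tensor_inl T' s.
Proof. exact: (tensor_desc_inl (tensor_inl_alg S T') hinr_g s). Qed.

Lemma tensor_map_inr t : tensor_map (tensor_inr S t) = tensor_inr S (g t).
Proof. exact: (tensor_desc_inr (tensor_inl_alg S T') hinr_g t). Qed.

Lemma tensor_map_ptens s t : tensor_map (ptens s t) = ptens s (g t).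
Proof.
by rewrite -!tensor_inlM_inr (rhomM (proj1 tensor_map_alg)) tensor_map_inl tensor_map_inr.
Qed.

End TensorMap.

Section EpsilonDual.
Variables (R : comPzRingType) (M : RMod R) (S : calg R).

(* R (+) S eps with eps^2 = 0; a pair (r, s) stands for r + s eps. *)
Definition eps_alg : calg R := sqz_alg (A := base_alg R) (rmorph_of_rhom (ca_strP S)).

Definition eps (s : S) : eps_alg := (0, s).

Definition eps_mul (T : calg R) (j : eps_alg -> T) (s : S) (t : T) : T := j (eps s) * t.

Lemma balanced_eps_mul (T : calg R) (j : eps_alg -> T) :
  alg_hom j -> balanced (eps_mul j).
Proof.
move=> [hj jS]; split=> [s s' t|s t t'|r s t]; rewrite /eps_mul.
- by rewrite -mulrDl -(rhomD hj) sqz_addE /= addr0.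
- exact: mulrDr.
- have -> : eps (s * ca_str S r) = ca_str eps_alg r * eps s.
    by rewrite sqz_mulE /= !mulr0 addr0 mulrC.
  by rewrite (rhomM hj) jS mulrCA mulrA.
Qed.

Section EpsilonDualDef.
Variable w : dualM M S.

Definition eps_dw (T : calg R) (j : eps_alg -> T) (hj : alg_hom j) (m : Mobj M T) : T :=
  tensor_lift (eps_mul j)
    (dw w (tensor_inl_alg S T) (Mmap (tensor_inr_alg S T) m)).

Lemma eps_dw_lin (T : calg R) (j : eps_alg -> T) (hj : alg_hom j) (t : T)
    (m m' : Mobj M T) :
  eps_dw hj (t *: m + m') = t * eps_dw hj m + eps_dw hj m'.
Proof.
have hf := balanced_eps_mul hj.
rewrite /eps_dw Mmap_semilin dw_lin tensor_liftD // tensor_lift_inrM //; congr (_ + _).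
rewrite (@tensor_lift_ext _ _ _ _ _ (fun s t' => t * eps_mul j s t')); last first.
  by move=> s t'; rewrite /eps_mul mulrCA.
by apply: tensor_lift_morph => a b; rewrite mulrDr.
Qed.

Lemma eps_dw_nat (T T' : calg R) (j : eps_alg -> T) (j' : eps_alg -> T')
    (hj : alg_hom j) (hj' : alg_hom j') (g : T -> T') (hg : alg_hom g) :
  (forall x, g (j x) = j' x) ->
  forall m : Mobj M T, eps_dw hj' (Mmap hg m) = g (eps_dw hj m).
Proof.
move=> gj m; have hf := balanced_eps_mul hj; have hf' := balanced_eps_mul hj'.
have hG := tensor_map_alg S hg.
have inr_map :
    Mmap (tensor_inr_alg S T') (Mmap hg m) = Mmap hG (Mmap (tensor_inr_alg S T) m).
  have hgi := alg_hom_comp hg (tensor_inr_alg S T').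
  rewrite -(Mmap_comp hg (tensor_inr_alg S T') hgi) //.
  by rewrite (Mmap_comp (tensor_inr_alg S T) hG hgi) // => t; rewrite /= tensor_map_inr.
rewrite /eps_dw inr_map (dw_nat w (tensor_inl_alg S T) (tensor_inl_alg S T') hG); last first.
  exact: tensor_map_inl.
move: (dw w _ _); apply: tensor_additive_ext.
- by move=> u v; rewrite (rhomD hG.1) tensor_liftD.
- by move=> u v; rewrite tensor_liftD // (rhomD hg.1).
- move=> s t; rewrite (tensor_map_ptens hg) !tensor_lift_ptens //.
  by rewrite /eps_mul (rhomM hg.1) gj.
Qed.

Definition eps_dual : dualM M eps_alg :=
  {| dw := eps_dw; dw_lin := eps_dw_lin; dw_nat := eps_dw_nat |}.

End EpsilonDualDef.

Lemma eps_alg_fst : @alg_hom R eps_alg (base_alg R) fst.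
Proof. by split; [split|]. Qed.

Lemma w_S_eps_dual (w : dualM M S) (m : Mobj M eps_alg) :
  w_S (eps_dual w) m = eps (w_R w (Mmap eps_alg_fst m)).
Proof.
have str_fst := alg_hom_comp eps_alg_fst (alg_hom_str S).
have hQ := tensor_desc_alg (alg_hom_id S) str_fst.
rewrite /w_S /= /eps_dw.
rewrite (@tensor_lift_ext _ _ _ _ _
    (fun (s : S) (t : eps_alg) => eps (s * ca_str S t.1))); last first.
  move=> s [r x]; rewrite /eps_mul sqz_mulE /= mul0r (rhom0 (ca_strP S)).
  by rewrite mul0r add0r mulrC.
rewrite tensor_lift_morph; last by move=> a b; rewrite sqz_addE /= addr0.
congr eps; rewrite -/(tensor_desc id (ca_str S \o (fst : eps_alg -> R)) _).
rewrite -(dw_nat w (tensor_inl_alg S eps_alg) (alg_hom_id S) hQ); last first.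
  exact: tensor_desc_inl.
rewrite /w_R /w_S -(Mmap_comp (tensor_inr_alg S eps_alg) hQ str_fst); last first.
  by move=> x; rewrite tensor_desc_inr.
by rewrite (Mmap_comp eps_alg_fst (alg_hom_str S) str_fst).
Qed.

Section DualNumbers.
Variables (T : calg R) (j : S -> T) (hj : alg_hom j).

(* T[eps]; the pair (t, t') stands for t + t' eps. *)
Definition dual_num : calg R := sqz_alg (idfun : {rmorphism T -> T}).

Definition dual_num_const (t : T) : dual_num := (t, 0).
Definition eps_to_dual_num (x : eps_alg) : dual_num := (ca_str T x.1, j x.2).

Lemma dual_num_const_alg : alg_hom dual_num_const.
Proof.
split=> //; split=> [a b|a b|] //; rewrite /dual_num_const ?sqz_addE ?sqz_mulE /=.
- by rewrite addr0.
- by rewrite !mulr0 addr0.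
Qed.

Lemma dual_num_epsM_const t : ((0, 1) : dual_num) * dual_num_const t = (0, t).
Proof. by rewrite sqz_mulE /= mul0r mulr0 add0r mulr1. Qed.

Lemma eps_to_dual_num_alg : alg_hom eps_to_dual_num.
Proof.
have [[jD jM _] jS] := hj; have hT := ca_strP T.
split=> [|r]; last by rewrite /eps_to_dual_num /= (rhom0 hj.1).
split=> [[a b] [c d]|[a b] [c d]|]; rewrite /eps_to_dual_num ?sqz_addE ?sqz_mulE /=.
- by rewrite (rhomD hT) jD.
- by rewrite (rhomM hT) jD !jM -!jS mulrC [j (ca_str S c) * _]mulrC.
- by rewrite (rhom1 hT) (rhom0 hj.1).
Qed.

Lemma eps_dw_dual_num (w : dualM M S) (m : Mobj M T) :
  dw (eps_dual w) eps_to_dual_num_alg (Mmap dual_num_const_alg m) =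
  ((0, dw w hj m) : dual_num).
Proof.
have hcj := alg_hom_comp hj dual_num_const_alg.
have hQ := tensor_desc_alg hcj (alg_hom_id dual_num).
rewrite /= /eps_dw.
rewrite (@tensor_lift_ext _ _ _ _ _ (fun (s : S) (t : dual_num) =>
    ((0, 1) : dual_num) * ((dual_num_const \o j) s * id t))); last first.
  move=> s t; rewrite /eps_mul mulrA dual_num_epsM_const.
  by rewrite /eps_to_dual_num /= (rhom0 (ca_strP T)).
rewrite tensor_lift_morph; last by move=> a b; rewrite mulrDr.
rewrite -/(tensor_desc (dual_num_const \o j) id _).
rewrite -(dw_nat w (tensor_inl_alg S dual_num) hcj hQ); last exact: tensor_desc_inl.
rewrite -(Mmap_comp (tensor_inr_alg S dual_num) hQ (alg_hom_id dual_num)); last first.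
  by move=> x; rewrite tensor_desc_inr.
rewrite Mmap_id // (dw_nat w hj hcj dual_num_const_alg) //.
exact: dual_num_epsM_const.
Qed.

End DualNumbers.

End EpsilonDual.

Theorem theorem3p13 (R : comPzRingType) (M : RMod R) :
  dually_separated M <->
  (forall (S : calg R) (w w' : dualM M S),
     (forall m, w_S w m = w_S w' m) -> dual_eq w w').
Proof.
split=> [sepR S w w' eqS | sepS S w w' eqR T j hj m].
  by apply: sepR => n; rewrite /w_R eqS.
have eq_eps : dual_eq (eps_dual w) (eps_dual w').
  by apply: sepS => n; rewrite !w_S_eps_dual eqR.
have := eq_eps _ _ (eps_to_dual_num_alg hj) (Mmap (dual_num_const_alg T) m).
by rewrite !eps_dw_dual_num => -[].
Qed.
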